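(* (Provably in $\mathsf{Z}^-_{\mathrm{FTM}\omega}$.) Let $U,V$ be any sets. Then $U\times V$ is a set, and the collection $\mathcal P_{\mathrm{fin}}(U)$ of all finite subsets of $U$ and the collection $U^{<\omega}$ of all finite sequences of elements of $U$ are sets as well.
   Context: $\mathsf{Z}^-_{\mathrm{FTM}\omega}$ is Zermelo set theory without Power Set and Choice (Extensionality, Pairing, Union, Infinity, Regularity, Separation) plus: (FC) every set $X$ has a superset $Y$ such that every finite $x\subseteq Y$ belongs to $Y$; (TS) every set has a transitive superset; (MC) every set binary relation $A$ that is well-founded and extensional admits a transitive set $X$ and a bijection $\eta$ from its field onto $X$ with $jAk\iff\eta(j)\in\eta(k)$; (Count) every set admits an injection into $\omega$. *)

(* A model of set theory is a type M with a membership
   relation mem; all set-theoretic notions below are defined internally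
   (as properties of elements of M), and the axioms of Z^-_{FTM omega} are
   stated first-order (Separation via a syntax of first-order formulas). *)
From Stdlib Require Import Arith.

Set Implicit Arguments.

Section SetTheory.
Variable M : Type.
Variable mem : M -> M -> Prop.
Local Infix "∈" := mem (at level 70).

(* de Bruijn variables; FAll binds variable 0 *)
Inductive form : Type :=
| FMem : nat -> nat -> form
| FEq  : nat -> nat -> form
| FFalse : form
| FImp : form -> form -> form
| FAll : form -> form.

Definition scons (x : M) (e : nat -> M) : nat -> M :=
  fun n => match n with 0 => x | S k => e k end.

Fixpoint sat (e : nat -> M) (p : form) : Prop :=
  match p with
  | FMem i j => e i ∈ e j
  | FEq i j => e i = e j
  | FFalse => False
  | FImp p q => sat e p -> sat e q
  | FAll p => forall x, sat (scons x e) p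
  end.

Definition subset (a b : M) : Prop := forall z, z ∈ a -> z ∈ b.
Definition is_empty (e : M) : Prop := forall z, ~ z ∈ e.
Definition is_upair (s a b : M) : Prop := forall z, z ∈ s <-> z = a \/ z = b.
Definition is_opair (p a b : M) : Prop :=
  forall z, z ∈ p <-> is_upair z a a \/ is_upair z a b.
Definition is_succ (s x : M) : Prop := forall z, z ∈ s <-> z ∈ x \/ z = x.
Definition inductive (I : M) : Prop :=
  (exists e, is_empty e /\ e ∈ I) /\
  (forall x, x ∈ I -> forall s, is_succ s x -> s ∈ I).
Definition in_omega (n : M) : Prop := forall I, inductive I -> n ∈ I.
Definition transitive_set (X : M) : Prop := forall y, y ∈ X -> forall z, z ∈ y -> z ∈ X.

Definition fapp (f x y : M) : Prop := exists p, p ∈ f /\ is_opair p x y.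
Definition is_function (f : M) : Prop :=
  (forall p, p ∈ f -> exists a b, is_opair p a b) /\
  (forall a b b', fapp f a b -> fapp f a b' -> b = b').
Definition fun_dom_is (f D : M) : Prop :=
  is_function f /\ forall x, x ∈ D <-> exists y, fapp f x y.
Definition fun_injective (f : M) : Prop :=
  forall a a' b, fapp f a b -> fapp f a' b -> a = a'.
Definition bijection (f D R : M) : Prop :=
  fun_dom_is f D /\ fun_injective f /\ (forall y, y ∈ R <-> exists x, fapp f x y).

Definition finite_set (x : M) : Prop :=
  exists n f, in_omega n /\ bijection f n x.

Definition rel_holds (A j k : M) : Prop := exists p, p ∈ A /\ is_opair p j k.
Definition is_relation (A : M) : Prop := forall p, p ∈ A -> exists a b, is_opair p a b.
Definition in_field (A j : M) : Prop := exists k, rel_holds A j k \/ rel_holds A k j.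
Definition rel_well_founded (A : M) : Prop :=
  forall S, (forall s, s ∈ S -> in_field A s) -> (exists s, s ∈ S) ->
    exists m, m ∈ S /\ forall k, k ∈ S -> ~ rel_holds A k m.
Definition rel_extensional (A : M) : Prop :=
  forall j k, in_field A j -> in_field A k ->
    (forall i, rel_holds A i j <-> rel_holds A i k) -> j = k.

Definition Z_minus_FTMw : Prop :=
  (forall a b, (forall z, z ∈ a <-> z ∈ b) -> a = b) /\
  (forall a b, exists s, is_upair s a b) /\
  (forall a, exists u, forall z, z ∈ u <-> exists y, y ∈ a /\ z ∈ y) /\
  (exists I, inductive I) /\
  (forall a, (exists x, x ∈ a) -> exists m, m ∈ a /\ forall z, z ∈ m -> ~ z ∈ a) /\
  (forall (phi : form) (env : nat -> M) a,
      exists b, forall x, x ∈ b <-> x ∈ a /\ sat (scons x env) phi) /\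
  (forall X, exists Y, subset X Y /\
      forall x, subset x Y -> finite_set x -> x ∈ Y) /\
  (forall X, exists Y, subset X Y /\ transitive_set Y) /\
  (* MC (Mostowski collapse): eta is a bijection from the field of A onto a
     transitive set X with  j A k <-> eta(j) ∈ eta(k) *)
  (forall A, is_relation A -> rel_well_founded A -> rel_extensional A ->
     exists X eta, transitive_set X /\ is_function eta /\
       (forall x, in_field A x <-> exists y, fapp eta x y) /\
       fun_injective eta /\
       (forall y, y ∈ X <-> exists x, fapp eta x y) /\
       (forall j k y z, fapp eta j y -> fapp eta k z ->
          (rel_holds A j k <-> y ∈ z))) /\
  (forall X, exists f, is_function f /\
       (forall x, x ∈ X <-> exists y, fapp f x y) /\
       fun_injective f /\
       (forall x y, fapp f x y -> in_omega y)).

End SetTheory.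

From Stdlib Require Import Setoid Classical.

(* By Separation it suffices to bound each class by a set.  FC applied to
   [U ∪ V] gives a set [Y] containing all finite subsets of [Y]; pairs are
   finite, so [Y] is closed under Kuratowski pairing and contains [U × V].
   FC applied to [U] bounds the finite subsets of [U].  For sequences, TS
   gives a transitive [T] above an inductive set, so every [n ∈ ω] is a
   subset of [T]; FC applied to [T ∪ U] then yields a set containing every
   pair [(k, u)] with [k ∈ n], [u ∈ U], hence every sequence [z : n → U],
   which is finite because [k ↦ (k, z k)] is a bijection from [n] onto it. *)

Set Implicit Arguments.

Section Definability.
Variable M : Type.
Variable mem : M -> M -> Prop.
Local Infix "∈" := mem (at level 70).

Definition definable (P : (nat -> M) -> Prop) : Prop :=
  exists phi, forall e, sat mem e phi <-> P e.

Definition env_tail (e : nat -> M) : nat -> M := fun n => e (S n).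

Definition is_variable (t : (nat -> M) -> M) : Prop := exists i, forall e, t e = e i.

Lemma definable_mem t1 t2 :
  is_variable t1 -> is_variable t2 -> definable (fun e => t1 e ∈ t2 e).
Proof. intros [i Hi] [j Hj]. exists (FMem i j). intro e. simpl. rewrite Hi, Hj. tauto. Qed.

Lemma definable_eq t1 t2 :
  is_variable t1 -> is_variable t2 -> definable (fun e => t1 e = t2 e).
Proof. intros [i Hi] [j Hj]. exists (FEq i j). intro e. simpl. rewrite Hi, Hj. tauto. Qed.

Lemma definable_imp A B :
  definable A -> definable B -> definable (fun e => A e -> B e).
Proof.
  intros [p Hp] [q Hq]. exists (FImp p q). intro e. simpl.
  specialize (Hp e); specialize (Hq e). tauto.
Qed.

Lemma definable_not A : definable A -> definable (fun e => ~ A e).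
Proof. intros [p Hp]. exists (FImp p FFalse). intro e. simpl. specialize (Hp e). tauto. Qed.

Lemma definable_and A B :
  definable A -> definable B -> definable (fun e => A e /\ B e).
Proof.
  intros [p Hp] [q Hq]. exists (FImp (FImp p (FImp q FFalse)) FFalse). intro e. simpl.
  specialize (Hp e); specialize (Hq e). destruct (classic (A e)); tauto.
Qed.

Lemma definable_or A B :
  definable A -> definable B -> definable (fun e => A e \/ B e).
Proof.
  intros [p Hp] [q Hq]. exists (FImp (FImp p FFalse) q). intro e. simpl.
  specialize (Hp e); specialize (Hq e). destruct (classic (A e)); tauto.
Qed.

Lemma definable_iff A B :
  definable A -> definable B -> definable (fun e => A e <-> B e).
Proof.
  intros HA HB. apply definable_and; apply definable_imp; assumption.
Qed.

(* The bound variable is [e 0]; the outer environment is [env_tail e]. *)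
Lemma definable_forall (B : (nat -> M) -> M -> Prop) :
  definable (fun e => B (env_tail e) (e 0)) -> definable (fun e => forall x, B e x).
Proof.
  intros [p Hp]. exists (FAll p). intro e. simpl.
  split; intros H x; apply (Hp (scons x e)); apply H.
Qed.

Lemma definable_exists (B : (nat -> M) -> M -> Prop) :
  definable (fun e => B (env_tail e) (e 0)) -> definable (fun e => exists x, B e x).
Proof.
  intros [p Hp]. exists (FImp (FAll (FImp p FFalse)) FFalse). intro e. simpl. split.
  - intro H. apply NNPP. intro Hnone. apply H. intros x Hx.
    apply Hnone. exists x. apply (Hp (scons x e)). exact Hx.
  - intros [x Hx] H. apply (H x). apply (Hp (scons x e)). exact Hx.
Qed.

End Definability.

Ltac definable_tac :=
  unfold finite_set, in_omega, inductive, is_empty, is_succ, bijection,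
    fun_dom_is, is_function, fapp, is_opair, is_upair, fun_injective, subset;
  repeat (cbv beta; first
    [ apply definable_iff | apply definable_and | apply definable_or
    | apply definable_not | apply definable_imp
    | apply definable_forall | apply definable_exists
    | apply definable_mem; eexists; intro; reflexivity
    | apply definable_eq; eexists; intro; reflexivity ]).

Section ZMinus.
Variable M : Type.
Variable mem : M -> M -> Prop.
Local Infix "∈" := mem (at level 70).

Definition closed_under_finite_subsets (Y : M) : Prop :=
  forall x, subset mem x Y -> finite_set mem x -> x ∈ Y.

Hypothesis extensionality : forall a b, (forall z, z ∈ a <-> z ∈ b) -> a = b.
Hypothesis pairing : forall a b, exists s, is_upair mem s a b.
Hypothesis union : forall a, exists u, forall z, z ∈ u <-> exists y, y ∈ a /\ z ∈ y.
Hypothesis infinity : exists I, inductive mem I.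
Hypothesis regularity :
  forall a, (exists x, x ∈ a) -> exists m, m ∈ a /\ forall z, z ∈ m -> ~ z ∈ a.
Hypothesis separation : forall (phi : form) (env : nat -> M) a,
  exists b, forall x, x ∈ b <-> x ∈ a /\ sat mem (scons x env) phi.
Hypothesis finite_closure :
  forall X, exists Y, subset mem X Y /\ closed_under_finite_subsets Y.
Hypothesis transitive_superset :
  forall X, exists Y, subset mem X Y /\ transitive_set mem Y.

Lemma bounded_class_is_set (P : (nat -> M) -> Prop) env Y :
  definable mem P -> (forall x, P (scons x env) -> x ∈ Y) ->
  exists S, forall x, x ∈ S <-> P (scons x env).
Proof.
  intros [phi Hphi] HY. destruct (separation phi env Y) as [S HS].
  exists S. intro x. rewrite HS, Hphi. split; [tauto|]. intro Hx. auto.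
Qed.
Arguments bounded_class_is_set : clear implicits.

Lemma upair_unique s t a b : is_upair mem s a b -> is_upair mem t a b -> s = t.
Proof. intros Hs Ht. apply extensionality. intro z. rewrite (Hs z), (Ht z). tauto. Qed.

Lemma opair_unique p q a b : is_opair mem p a b -> is_opair mem q a b -> p = q.
Proof. intros Hp Hq. apply extensionality. intro z. rewrite (Hp z), (Hq z). tauto. Qed.

Lemma opair_exists a b : exists p, is_opair mem p a b.
Proof.
  destruct (pairing a a) as [s1 H1]; destruct (pairing a b) as [s2 H2].
  destruct (pairing s1 s2) as [p Hp]. exists p. intro z. rewrite (Hp z). split.
  - intros [-> | ->]; [left | right]; assumption.
  - intros [Hz | Hz]; [left | right]; eapply upair_unique; eassumption.
Qed.

Lemma opair_inj p a b a' b' :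
  is_opair mem p a b -> is_opair mem p a' b' -> a = a' /\ b = b'.
Proof.
  intros Hp Hq.
  destruct (pairing a a) as [s Hs].
  assert (Ha : a' = a).
  { assert (Hsp : s ∈ p) by (apply Hp; left; exact Hs).
    apply Hq in Hsp.
    assert (Ha's : a' ∈ s) by (destruct Hsp as [H | H]; apply H; left; reflexivity).
    apply Hs in Ha's. tauto. }
  subst a'. split; [reflexivity |].
  destruct (pairing a b) as [t Ht].
  assert (Hb : b = a \/ b = b').
  { assert (Htp : t ∈ p) by (apply Hp; right; exact Ht).
    assert (Hbt : b ∈ t) by (apply Ht; right; reflexivity).
    apply Hq in Htp. destruct Htp as [H | H]; apply H in Hbt; tauto. }
  destruct Hb as [-> | Hb]; [| exact Hb].
  destruct (pairing a b') as [t' Ht'].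
  assert (Htp' : t' ∈ p) by (apply Hq; right; exact Ht').
  assert (Hbt' : b' ∈ t') by (apply Ht'; right; reflexivity).
  apply Hp in Htp'. destruct Htp' as [H | H]; apply H in Hbt'; destruct Hbt'; congruence.
Qed.

Lemma union2_exists a b : exists u, forall z, z ∈ u <-> z ∈ a \/ z ∈ b.
Proof.
  destruct (pairing a b) as [s Hs]. destruct (union s) as [u Hu].
  exists u. intro z. rewrite Hu. split.
  - intros [y [Hy Hzy]]. apply Hs in Hy. destruct Hy; subst; tauto.
  - intros [H | H]; eexists; (split; [apply Hs | exact H]); auto.
Qed.

Lemma succ_exists x : exists s, is_succ mem s x.
Proof.
  destruct (pairing x x) as [sx Hsx]. destruct (union2_exists x sx) as [s Hs].
  exists s. intro z. rewrite (Hs z), (Hsx z). tauto.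
Qed.

Lemma in_omega_empty e : is_empty mem e -> in_omega mem e.
Proof.
  intros He I [[e' [He' HI]] _].
  replace e with e'; [exact HI |].
  apply extensionality. intro z. split; intro H; [destruct (He' z H) | destruct (He z H)].
Qed.

Lemma in_omega_succ n s : in_omega mem n -> is_succ mem s n -> in_omega mem s.
Proof. intros Hn Hs I HI. exact (proj2 HI n (Hn I HI) s Hs). Qed.

Lemma mem_irrefl x : ~ x ∈ x.
Proof.
  intro Hx. destruct (pairing x x) as [s Hs].
  destruct (regularity (a := s)) as [m [Hm Hmin]].
  { exists x. apply Hs. left; reflexivity. }
  apply Hs in Hm. assert (m = x) as -> by tauto.
  apply (Hmin x Hx). apply Hs. left; reflexivity.
Qed.

Lemma finite_empty e : is_empty mem e -> finite_set mem e.
Proof.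
  intro He. exists e, e. split; [exact (in_omega_empty He) |].
  assert (Hnone : forall a b, ~ fapp mem e a b) by (intros a b [p [Hp _]]; exact (He p Hp)).
  split; [split; [split |] | split].
  - intros p Hp. destruct (He p Hp).
  - intros a b b' H. destruct (Hnone _ _ H).
  - intro x. split; [intro H; destruct (He x H) | intros [y H]; destruct (Hnone _ _ H)].
  - intros a a' b H. destruct (Hnone _ _ H).
  - intro y. split; [intro H; destruct (He y H) | intros [x H]; destruct (Hnone _ _ H)].
Qed.

Lemma graph_add_exists f a b :
  exists g, forall p, p ∈ g <-> p ∈ f \/ is_opair mem p a b.
Proof.
  destruct (opair_exists a b) as [q Hq]. destruct (pairing q q) as [sq Hsq].
  destruct (union2_exists f sq) as [g Hg].
  exists g. intro p. rewrite (Hg p), (Hsq p). split.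
  - intros [H | [-> | ->]]; auto.
  - intros [H | H]; [left; exact H |]. right; left. eapply opair_unique; eassumption.
Qed.

Lemma fapp_graph_add f g a b :
  (forall p, p ∈ g <-> p ∈ f \/ is_opair mem p a b) ->
  forall u v, fapp mem g u v <-> fapp mem f u v \/ (u = a /\ v = b).
Proof.
  intros Hg u v. split.
  - intros [p [Hp Hpo]]. apply Hg in Hp. destruct Hp as [Hp | Hp].
    + left. exists p. tauto.
    + right. destruct (opair_inj Hp Hpo). split; congruence.
  - intros [[p [Hp Hpo]] | [-> ->]].
    + exists p. split; [apply Hg; left |]; assumption.
    + destruct (opair_exists a b) as [q Hq]. exists q. split; [apply Hg; right |]; assumption.
Qed.

(* The bijection [n → x] extended by [n ↦ a]; Regularity ([n ∉ n]) keeps it a function. *)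
Lemma finite_set_add x a s : finite_set mem x -> ~ a ∈ x ->
  (forall z, z ∈ s <-> z ∈ x \/ z = a) -> finite_set mem s.
Proof.
  intros [n [f [Hn [[[Hpairs Hfun] Hdom] [Hinj Hrng]]]]] Ha Hs.
  destruct (succ_exists n) as [n' Hn'].
  destruct (graph_add_exists f n a) as [g Hg].
  pose proof (fapp_graph_add Hg) as Happ.
  assert (Hn_dom : forall y, ~ fapp mem f n y).
  { intros y H. apply (mem_irrefl (x := n)), Hdom. exists y; exact H. }
  assert (Ha_rng : forall u, ~ fapp mem f u a).
  { intros u H. apply Ha, Hrng. exists u; exact H. }
  exists n', g. split; [exact (in_omega_succ Hn Hn') |].
  split; [split; [split |] | split].
  - intros p Hp. apply Hg in Hp. destruct Hp as [Hp | Hp]; [exact (Hpairs p Hp) | eauto].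
  - intros u v v' H1 H2. apply Happ in H1. apply Happ in H2.
    destruct H1 as [H1 | [-> ->]]; destruct H2 as [H2 | [E ->]];
      [exact (Hfun _ _ _ H1 H2) | subst u; destruct (Hn_dom _ H1)
      | destruct (Hn_dom _ H2) | reflexivity].
  - intro u. rewrite (Hn' u), (Hdom u). split.
    + intros [[y Hy] | ->]; [exists y | exists a]; apply Happ; auto.
    + intros [y Hy]. apply Happ in Hy. destruct Hy as [Hy | [-> _]]; eauto.
  - intros u u' v H1 H2. apply Happ in H1. apply Happ in H2.
    destruct H1 as [H1 | [-> ->]]; destruct H2 as [H2 | [-> E]];
      [exact (Hinj _ _ _ H1 H2) | subst v; destruct (Ha_rng _ H1)
      | destruct (Ha_rng _ H2) | reflexivity].
  - intro y. rewrite Hs, Hrng. split.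
    + intros [[u Hu] | ->]; [exists u | exists n]; apply Happ; auto.
    + intros [u Hu]. apply Happ in Hu. destruct Hu as [Hu | [_ ->]]; eauto.
Qed.

Lemma finite_upair s a b : is_upair mem s a b -> finite_set mem s.
Proof.
  intro Hs. destruct infinity as [I [[e [He _]] _]].
  destruct (pairing a a) as [s1 Hs1].
  assert (Hfin1 : finite_set mem s1).
  { apply (finite_set_add (finite_empty He) (He a)).
    intro z. rewrite (Hs1 z). split; [intros [H | H]; auto |].
    intros [H | H]; [destruct (He z H) | auto]. }
  destruct (classic (b = a)) as [-> | Hba].
  - replace s with s1; [exact Hfin1 | eapply upair_unique; eassumption].
  - apply (finite_set_add (a := b) Hfin1).
    + intro H. apply Hs1 in H. tauto.
    + intro z. rewrite (Hs z), (Hs1 z). tauto.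
Qed.

Section Closure.
Variable Y : M.
Hypothesis HY : closed_under_finite_subsets Y.

Lemma upair_mem_closed s a b : is_upair mem s a b -> a ∈ Y -> b ∈ Y -> s ∈ Y.
Proof.
  intros Hs Ha Hb. apply HY; [| exact (finite_upair Hs)].
  intros z Hz. apply Hs in Hz. destruct Hz as [-> | ->]; assumption.
Qed.

Lemma opair_mem_closed p a b : is_opair mem p a b -> a ∈ Y -> b ∈ Y -> p ∈ Y.
Proof.
  intros Hp Ha Hb.
  destruct (pairing a a) as [s1 Hs1]; destruct (pairing a b) as [s2 Hs2].
  apply (upair_mem_closed (a := s1) (b := s2)).
  - intro z. rewrite (Hp z). split.
    + intros [H | H]; [left | right]; eapply upair_unique; eassumption.
    + intros [-> | ->]; [left | right]; assumption.
  - exact (upair_mem_closed Hs1 Ha Ha).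
  - exact (upair_mem_closed Hs2 Ha Hb).
Qed.

End Closure.

Lemma graph_index_exists z D : (forall k y, fapp mem z k y -> k ∈ D) ->
  exists g, is_relation mem g /\
    forall k p, fapp mem g k p <-> p ∈ z /\ exists y, is_opair mem p k y.
Proof.
  intro HD. destruct (union2_exists D z) as [X HX].
  destruct (finite_closure X) as [Y [HXY HY]].
  destruct (bounded_class_is_set
    (fun e => exists k p y, p ∈ e 1 /\ is_opair mem p k y /\ is_opair mem (e 0) k p)
    (fun _ => z) Y) as [g Hg].
  { definable_tac. }
  { intros q [k [p [y [Hp [Hpo Hq]]]]]. apply (opair_mem_closed HY Hq); apply HXY, HX.
    - left. apply (HD k y). exists p. auto.
    - right. exact Hp. }
  simpl in Hg. exists g. split.
  - intros q Hq. apply Hg in Hq. destruct Hq as [k [p [_ [_ [_ Hq]]]]]. eauto.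
  - intros k p. split.
    + intros [q [Hq Hqo]]. apply Hg in Hq. destruct Hq as [k' [p' [y [Hp' [Hpo Hqo']]]]].
      destruct (opair_inj Hqo Hqo'). subst k' p'. eauto.
    + intros [Hp [y Hpo]]. destruct (opair_exists k p) as [q Hq].
      exists q. split; [apply Hg; exists k, p, y; auto | exact Hq].
Qed.

Lemma finite_fun_dom_omega z n : in_omega mem n -> fun_dom_is mem z n -> finite_set mem z.
Proof.
  intros Hn [[Hpairs Hfun] Hdom].
  destruct (graph_index_exists (z := z) (D := n)) as [g [Hgrel Hg]].
  { intros k y H. apply Hdom. eauto. }
  exists n, g. split; [exact Hn |].
  split; [split; [split |] | split].
  - exact Hgrel.
  - intros k p p' H1 H2. apply Hg in H1 as [Hp [y Hy]]. apply Hg in H2 as [Hp' [y' Hy']].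
    assert (y = y') as <- by (apply (Hfun k); [exists p | exists p']; auto).
    exact (opair_unique Hy Hy').
  - intro k. rewrite Hdom. split.
    + intros [y [p [Hp Hpo]]]. exists p. apply Hg. eauto.
    + intros [p Hp]. apply Hg in Hp as [Hp [y Hy]]. exists y, p. auto.
  - intros k k' p H1 H2. apply Hg in H1 as [_ [y Hy]]. apply Hg in H2 as [_ [y' Hy']].
    exact (proj1 (opair_inj Hy Hy')).
  - intro p. split.
    + intro Hp. destruct (Hpairs p Hp) as [k [y Hy]]. exists k. apply Hg. eauto.
    + intros [k Hk]. apply Hg in Hk. tauto.
Qed.

Lemma in_omega_sub_transitive I T n : inductive mem I -> subset mem I T ->
  transitive_set mem T -> in_omega mem n -> subset mem n T.
Proof. intros HI HIT HT Hn k Hk. exact (HT n (HIT n (Hn I HI)) k Hk). Qed.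

Lemma product_exists U V : exists P, forall z, z ∈ P <->
  exists u v, u ∈ U /\ v ∈ V /\ is_opair mem z u v.
Proof.
  destruct (union2_exists U V) as [X HX].
  destruct (finite_closure X) as [Y [HXY HY]].
  refine (bounded_class_is_set
    (fun e => exists u v, u ∈ e 1 /\ v ∈ e 2 /\ is_opair mem (e 0) u v)
    (scons U (fun _ => V)) Y _ _).
  - definable_tac.
  - intros z [u [v [Hu [Hv Hz]]]]. apply (opair_mem_closed HY Hz); apply HXY, HX; auto.
Qed.

Lemma finite_subsets_exist U : exists F, forall z, z ∈ F <->
  subset mem z U /\ finite_set mem z.
Proof.
  destruct (finite_closure U) as [Y [HUY HY]].
  refine (bounded_class_is_set
    (fun e => subset mem (e 0) (e 1) /\ finite_set mem (e 0))
    (fun _ => U) Y _ _).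
  - definable_tac.
  - intros z [HzU Hfin]. apply HY; [| exact Hfin]. intros w Hw. apply HUY, HzU, Hw.
Qed.

Lemma finite_sequences_exist U : exists S, forall z, z ∈ S <->
  exists n, in_omega mem n /\ fun_dom_is mem z n /\ (forall x y, fapp mem z x y -> y ∈ U).
Proof.
  destruct infinity as [I HI].
  destruct (transitive_superset I) as [T [HIT HT]].
  destruct (union2_exists T U) as [X HX].
  destruct (finite_closure X) as [Y [HXY HY]].
  refine (bounded_class_is_set
    (fun e => exists n, in_omega mem n /\ fun_dom_is mem (e 0) n /\
       (forall x y, fapp mem (e 0) x y -> y ∈ e 1))
    (fun _ => U) Y _ _).
  - definable_tac.
  - intros z [n [Hn [Hzn HzU]]]. apply HY; [| exact (finite_fun_dom_omega Hn Hzn)].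
    intros p Hp. destruct Hzn as [[Hpairs _] Hdom].
    destruct (Hpairs p Hp) as [k [u Hp_ku]].
    assert (Hku : fapp mem z k u) by (exists p; auto).
    apply (opair_mem_closed HY Hp_ku); apply HXY, HX.
    + left. apply (in_omega_sub_transitive HI HIT HT Hn), Hdom. eauto.
    + right. exact (HzU _ _ Hku).
Qed.

End ZMinus.

Theorem lemma9p2 (M : Type) (mem : M -> M -> Prop)
  (HZ : Z_minus_FTMw mem) (U V : M) :
  (exists P, forall z, mem z P <->
      exists u v, mem u U /\ mem v V /\ is_opair mem z u v) /\
  (exists F, forall z, mem z F <-> subset mem z U /\ finite_set mem z) /\
  (exists S, forall z, mem z S <->
      exists n, in_omega mem n /\ fun_dom_is mem z n /\
        (forall x y, fapp mem z x y -> mem y U)).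
Proof.
  destruct HZ as [ext [pair [union [inf [reg [sep [fc [ts _]]]]]]]].
  split; [| split].
  - apply product_exists; assumption.
  - apply finite_subsets_exist; assumption.
  - apply finite_sequences_exist; assumption.
Qed.
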